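(* Let $J$ be a complex structure on a $2$-step nilpotent real Lie algebra $\mathfrak{n}$ with center $\mathfrak{z}$ and commutator ideal $\mathfrak{n}'$. If $\mathfrak{z}_0$ is an ideal of $\mathfrak{n}$ with $\mathfrak{n}'\subset\mathfrak{z}_0\subset\mathfrak{z}$, then $J\mathfrak{z}_0$ is an abelian ideal of $\mathfrak{n}$.
   Context: A complex structure on a real Lie algebra $\mathfrak{g}$ is a linear map $J:\mathfrak{g}\to\mathfrak{g}$ with $J^2=-I$ and $N_J(x,y):=[x,y]+J([Jx,y]+[x,Jy])-[Jx,Jy]=0$ for all $x,y\in\mathfrak{g}$. A Lie algebra $\mathfrak{n}$ is $2$-step nilpotent if it is non-abelian and $\mathfrak{n}'=[\mathfrak{n},\mathfrak{n}]\subset\mathfrak{z}$. *)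

From HB Require Import structures.
From mathcomp Require Import all_boot all_order all_algebra.
From mathcomp Require Import reals.
Set Implicit Arguments. Unset Strict Implicit. Unset Printing Implicit Defensive.
Import GRing.Theory.
Local Open Scope ring_scope.

Section LieDefs.
Variables (R : fieldType) (V : lmodType R).

Definition is_lie_bracket (br : V -> V -> V) : Prop :=
  [/\ (forall (a : R) x y z, br (a *: x + y) z = a *: br x z + br y z),
      (forall (a : R) x y z, br z (a *: x + y) = a *: br z x + br z y),
      (forall x, br x x = 0) &
      (forall x y z, br x (br y z) + br y (br z x) + br z (br x y) = 0)].

Definition nijenhuis (br : V -> V -> V) (J : V -> V) (x y : V) : V :=
  br x y + J (br (J x) y + br x (J y)) - br (J x) (J y).

Definition complex_structure (br : V -> V -> V) (J : V -> V) : Prop :=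
  (forall x, J (J x) = - x) /\ (forall x y, nijenhuis br J x y = 0).

Definition in_center (br : V -> V -> V) (x : V) : Prop := forall y, br x y = 0.

Definition two_step_nilpotent (br : V -> V -> V) : Prop :=
  (exists x y, br x y != 0) /\ (forall x y, in_center br (br x y)).
End LieDefs.

Section LieSub.
Variables (R : fieldType) (V : vectType R).

Definition lie_ideal (br : V -> V -> V) (I : {vspace V}) : Prop :=
  forall x y, x \in I -> br x y \in I.

Definition lie_abelian (br : V -> V -> V) (I : {vspace V}) : Prop :=
  forall x y, x \in I -> y \in I -> br x y = 0.

Definition derived_sub (br : V -> V -> V) (I : {vspace V}) : Prop :=
  forall x y, br x y \in I.

Definition sub_center (br : V -> V -> V) (I : {vspace V}) : Prop :=
  forall x, x \in I -> in_center br x.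
End LieSub.

(* For z central, the Nijenhuis condition N(z, x) = 0 collapses to
   [Jz, Jx] = J [Jz, x].  Writing y = J (J (-y)), every bracket [Jz, y] is
   therefore J of a bracket, which lies in J z0 because n' ⊂ z0; and for z, z'
   in z0 the bracket [Jz, Jz'] = J [Jz, z'] vanishes since z' is central. *)
From HB Require Import structures.
From mathcomp Require Import all_boot all_order all_algebra.
From mathcomp Require Import reals.
Set Implicit Arguments. Unset Strict Implicit. Unset Printing Implicit Defensive.
Import GRing.Theory.
Local Open Scope ring_scope.

Section LieBracket.
Variables (R : fieldType) (V : lmodType R) (br : V -> V -> V).
Hypothesis br_lie : is_lie_bracket br.

Lemma lie_bracket_anti x y : br x y = - br y x.
Proof.
case: br_lie => brDl brDr br_alt _.
have addl u v w : br (u + v) w = br u w + br v w.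
  by have := brDl 1 u v w; rewrite !scale1r.
have addr u v w : br w (u + v) = br w u + br w v.
  by have := brDr 1 u v w; rewrite !scale1r.
have /eqP := br_alt (x + y).
by rewrite addl !addr !br_alt add0r addr0 addr_eq0 => /eqP.
Qed.

Lemma in_center_bracketr z x : in_center br z -> br x z = 0.
Proof. by move=> zC; rewrite lie_bracket_anti zC oppr0. Qed.

End LieBracket.

Section NijenhuisCenter.
Variables (R : fieldType) (V : lmodType R) (br : V -> V -> V) (J : V -> V).
Hypothesis JJ : forall x, J (J x) = - x.
Hypothesis nijenhuis0 : forall x y, nijenhuis br J x y = 0.

Lemma nijenhuis_center z x :
  in_center br z -> br (J z) (J x) = J (br (J z) x).
Proof.
move=> zC; have /eqP := nijenhuis0 z x.
by rewrite /nijenhuis !zC add0r addr0 subr_eq0 => /eqP.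
Qed.

Lemma bracket_J_center z y :
  in_center br z -> br (J z) y = J (br (J z) (J (- y))).
Proof. by move=> zC; rewrite -nijenhuis_center // JJ opprK. Qed.

End NijenhuisCenter.

Section ImageOfCentralIdeal.
Variables (R : fieldType) (V : vectType R) (br : V -> V -> V) (J : 'End(V)).
Variable z0 : {vspace V}.
Hypotheses (br_lie : is_lie_bracket br) (J_cplx : complex_structure br J).
Hypotheses (z0_derived : derived_sub br z0) (z0_central : sub_center br z0).

Lemma lie_ideal_img_center : lie_ideal br (J @: z0)%VS.
Proof.
case: J_cplx => JJ nijenhuis0 w y /memv_imgP [z /z0_central zC ->].
by rewrite (bracket_J_center JJ nijenhuis0) // memv_img.
Qed.

Lemma lie_abelian_img_center : lie_abelian br (J @: z0)%VS.
Proof.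
case: J_cplx => _ nijenhuis0 w w' /memv_imgP [z /z0_central zC ->].
move=> /memv_imgP [z' /z0_central z'C ->].
by rewrite nijenhuis_center // (in_center_bracketr br_lie) // linear0.
Qed.

End ImageOfCentralIdeal.

Theorem mainTheorem3 (R : realType) (V : vectType R) (br : V -> V -> V)
  (J : 'End(V)) (z0 : {vspace V}) :
  is_lie_bracket br ->
  two_step_nilpotent br ->
  complex_structure br J ->
  lie_ideal br z0 ->
  derived_sub br z0 ->
  sub_center br z0 ->
  lie_ideal br (J @: z0)%VS /\ lie_abelian br (J @: z0)%VS.
Proof.
move=> br_lie _ J_cplx _ z0_derived z0_central.
split; [exact: lie_ideal_img_center | exact: lie_abelian_img_center].
Qed.
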